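(* (1) Every ideal of $C(X)_\mathcal{P}$ has depth zero if and only if $(X,\tau,\mathcal{P})$ is a $\mathcal{P}P$-space. (2) Every essential ideal of $C(X)_\mathcal{P}$ has depth zero if and only if $(X,\tau,\mathcal{P})$ is an almost $\mathcal{P}P$-space.
   Context: Let $(X,\tau)$ be a $T_1$ topological space and $\mathcal{P}$ an ideal of closed subsets of $X$ (a nonempty family of closed sets closed under finite unions and under taking closed subsets). For $f\colon X\to\mathbb{R}$, $D_f$ denotes the set of points of discontinuity of $f$, and $C(X)_\mathcal{P}=\{f\colon X\to\mathbb{R} : \overline{D_f}\in\mathcal{P}\}$, a commutative ring with unity under pointwise operations. For $f\in C(X)_\mathcal{P}$, $Z_\mathcal{P}(f)=\{x: f(x)=0\}$, $coz(f)=X\setminus Z_\mathcal{P}(f)$; $X_\mathcal{P}$ is $X$ with the topology having base $\{coz(f)\}$ and $int_{X_\mathcal{P}}$ its interior. $(X,\tau,\mathcal{P})$ is a $\mathcal{P}P$-space if $C(X)_\mathcal{P}$ is von Neumann regular, and an almost $\mathcal{P}P$-space if $Z_\mathcal{P}(f)\ne\emptyset$ implies $int_{X_\mathcal{P}}Z_\mathcal{P}(f)\neq\emptyset$ for $f\in C(X)_\mathcal{P}$. For an ideal $I$ regarded as a $C(X)_\mathcal{P}$-module $M$, an element $a$ is $M$-regular if $am\neq 0$ for all $m\in M\setminus\{0\}$; a sequence $a_1,\dots,a_n$ is $I$-regular if $a_1$ is $I$-regular, each $a_k$ is $I/(a_1I+\dots+a_{k-1}I)$-regular, and $a_1I+\dots+a_nI\neq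 I$; the depth of $I$ is the length of a maximal $I$-regular sequence. An ideal is essential if it intersects every nonzero ideal nontrivially. *)

From HB Require Import structures.
From mathcomp Require Import all_boot all_order all_algebra.
From mathcomp Require Import all_classical all_reals all_analysis.
Set Implicit Arguments. Unset Strict Implicit. Unset Printing Implicit Defensive.
Import Order.TTheory GRing.Theory Num.Theory numFieldNormedType.Exports.
Local Open Scope classical_set_scope.
Local Open Scope ring_scope.

Section CXP.
Variables (X : topologicalType) (R : realType).

Definition closed_ideal (P : set (set X)) : Prop :=
  [/\ P !=set0,
      (forall A, P A -> closed A),
      (forall A B, P A -> P B -> P (A `|` B)) &
      (forall A B, P A -> closed B -> B `<=` A -> P B)].

Definition discont (f : X -> R) : set X := [set x : X | ~ {for x, continuous f}].

Definition CP (P : set (set X)) : set (X -> R) :=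
  [set f | P (closure (discont f))].

Definition zeroset (f : X -> R) : set X := [set x | f x = 0].
Definition coz (f : X -> R) : set X := [set x | f x != 0].

(* interior in X_P, the topology on X with base { coz f | f in C(X)_P } *)
Definition int_XP (P : set (set X)) (A : set X) : set X :=
  [set x | exists g, CP P g /\ coz g x /\ coz g `<=` A].

(* C(X)_P is von Neumann regular *)
Definition PP_space (P : set (set X)) : Prop :=
  forall f, CP P f -> exists2 g, CP P g & f = (fun x => f x * g x * f x).

Definition almost_PP_space (P : set (set X)) : Prop :=
  forall f, CP P f -> zeroset f !=set0 -> int_XP P (zeroset f) !=set0.

Definition is_ideal (P : set (set X)) (I : set (X -> R)) : Prop :=
  [/\ I `<=` CP P,
      I (fun _ => 0),
      (forall f g, I f -> I g -> I (fun x => f x + g x)) &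
      (forall a f, CP P a -> I f -> I (fun x => a x * f x))].

Definition nonzero_set (I : set (X -> R)) : Prop :=
  exists2 f, I f & f <> (fun _ => 0).

Definition essential_ideal (P : set (set X)) (I : set (X -> R)) : Prop :=
  is_ideal P I /\
  forall J, is_ideal P J -> nonzero_set J -> nonzero_set (I `&` J).

Definition sum_mul_ideal (I : set (X -> R)) (a : nat -> X -> R) (k : nat)
  : set (X -> R) :=
  [set h | exists2 m : nat -> X -> R, (forall j, (j < k)%N -> I (m j)) &
           h = (fun x => \sum_(j < k) a j x * m j x)].

(* b is (M/N)-regular, M = I, N a submodule of I *)
Definition quot_regular (I N : set (X -> R)) (b : X -> R) : Prop :=
  forall m, I m -> ~ N m -> ~ N (fun x => b x * m x).

Definition regular_seq (P : set (set X)) (I : set (X -> R))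
  (a : nat -> X -> R) (n : nat) : Prop :=
  [/\ (forall k, (k < n)%N -> CP P (a k)),
      (forall k, (k < n)%N -> quot_regular I (sum_mul_ideal I a k) (a k)) &
      sum_mul_ideal I a n <> I].

Definition depth_zero (P : set (set X)) (I : set (X -> R)) : Prop :=
  ~ exists a n, (0 < n)%N /\ regular_seq P I a n.

End CXP.

(* Depth zero of an ideal I says exactly that every I-regular element b
   satisfies b I = I: otherwise the one-term sequence (b) is I-regular, and
   conversely the first term a_0 of any I-regular sequence is I-regular with
   a_0 I + ... + a_(n-1) I <> I.  If C(X)_P is von Neumann regular with
   a = a b a, then m - a b m is killed by a, so a I = I.  Conversely, for f in
   C(X)_P the element f is regular on the principal ideal (f), and f (f) = (f)
   yields f = f r f.  For essential ideals: an element regular on an essential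
   ideal cannot vanish on a nonempty open set of X_P (the principal ideal of a
   cozero set inside its zero set meets I), so in an almost PP-space it is
   nowhere zero, hence a unit.  Conversely C(X)_P is itself essential, and a
   function with nonempty zero set of empty X_P-interior is regular on it
   without being a unit. *)
From mathcomp Require Import all_boot all_order all_algebra.
From mathcomp Require Import all_classical all_reals all_analysis.
From mathcomp Require Import ring.
Import Order.TTheory GRing.Theory Num.Theory numFieldNormedType.Exports.
Local Open Scope classical_set_scope.
Local Open Scope ring_scope.
Set Implicit Arguments.

Lemma fun_neq0P (T : Type) (V : zmodType) (f : T -> V) :
  f <> (fun _ => 0) -> exists x, f x != 0.
Proof.
move=> nf; apply: contrapT => nx; apply: nf; apply/funext => x.
by apply/eqP; apply: contrapT => fx; apply: nx; exists x; apply/negP.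
Qed.

Section CXP_depth.
Variables (X : topologicalType) (R : realType) (P : set (set X)).
Hypothesis hP : closed_ideal P.

Definition mul_set (b : X -> R) (I : set (X -> R)) : set (X -> R) :=
  [set h | exists2 m, I m & h = (fun x => b x * m x)].

Definition regular_on (I : set (X -> R)) (b : X -> R) : Prop :=
  forall m, I m -> (fun x => b x * m x) = (fun _ => 0) -> m = (fun _ => 0).

Lemma CP_sub_discontU (h f g : X -> R) : CP P f -> CP P g ->
  discont h `<=` discont f `|` discont g -> CP P h.
Proof.
case: hP => _ _ PU PS Cf Cg sub; apply: (PS _ _ (PU _ _ Cf Cg)).
  exact: closed_closure.
by rewrite -closureU; exact: closureS.
Qed.

Lemma CP_cst (c : R) : CP P (fun _ => c).
Proof.
case: hP => -[A PA] _ _ PS; apply: (PS A) => //; first exact: closed_closure.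
have discont_cst : discont (fun _ : X => c) `<=` set0.
  by move=> x nc; apply: nc; exact: cvg_cst.
by move=> x /(closureS discont_cst); rewrite closure0.
Qed.

Lemma CPD (f g : X -> R) : CP P f -> CP P g -> CP P (fun x => f x + g x).
Proof.
move=> Cf Cg; apply: (CP_sub_discontU Cf Cg) => x nc.
have [cf|] := pselect {for x, continuous f}; last by left.
have [cg|] := pselect {for x, continuous g}; last by right.
by exfalso; apply: nc; exact: cvgD cf cg.
Qed.

Lemma CPM (f g : X -> R) : CP P f -> CP P g -> CP P (fun x => f x * g x).
Proof.
move=> Cf Cg; apply: (CP_sub_discontU Cf Cg) => x nc.
have [cf|] := pselect {for x, continuous f}; last by left.
have [cg|] := pselect {for x, continuous g}; last by right.
by exfalso; apply: nc; exact: cvgM cf cg.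
Qed.

Lemma CPV (f : X -> R) :
  CP P f -> (forall x, f x != 0) -> CP P (fun x => (f x)^-1).
Proof.
move=> Cf nz; apply: (CP_sub_discontU Cf Cf) => x nc.
have [cf|] := pselect {for x, continuous f}; last by left.
by exfalso; apply: nc; exact: cvgV (nz x) cf.
Qed.

Lemma CP_ideal : is_ideal P (CP (R:=R) P).
Proof. by split => //; [exact: CP_cst | move=> f g; exact: CPD | move=> a f; exact: CPM]. Qed.

Lemma CP_essential : essential_ideal P (CP (R:=R) P).
Proof.
split; first exact: CP_ideal.
by move=> J [JC _ _ _] [g Jg g0]; exists g => //; split => //; exact: JC.
Qed.

Lemma principal_ideal (g : X -> R) : CP P g -> is_ideal P (mul_set g (CP P)).
Proof.
move=> Cg; split.
- by move=> _ [r Cr ->]; exact: CPM.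
- by exists (fun _ => 0); [exact: CP_cst | apply/funext => x; rewrite mulr0].
- move=> _ _ [r Cr ->] [s Cs ->]; exists (fun x => r x + s x); first exact: CPD.
  by apply/funext => x; rewrite mulrDr.
- move=> a _ Ca [r Cr ->]; exists (fun x => a x * r x); first exact: CPM.
  by apply/funext => x; rewrite mulrCA.
Qed.

Lemma principal_self (g : X -> R) : mul_set g (CP P) g.
Proof. by exists (fun _ => 1); [exact: CP_cst | apply/funext => x; rewrite mulr1]. Qed.

Lemma mul_set_sub (I : set (X -> R)) (b : X -> R) :
  is_ideal P I -> CP P b -> mul_set b I `<=` I.
Proof. by case=> _ _ _ IM Cb _ [m Im ->]; exact: IM. Qed.

Lemma mul_set_unit (I : set (X -> R)) (b : X -> R) :
  is_ideal P I -> CP P b -> (forall x, b x != 0) -> mul_set b I = I.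
Proof.
move=> II Cb nz; apply/seteqP; split; first exact: mul_set_sub.
move=> m Im; exists (fun x => (b x)^-1 * m x).
  by case: II => _ _ _ IM; apply: IM Im; exact: CPV.
by apply/funext => x; rewrite mulrA mulfV // mul1r.
Qed.

Lemma sum_mul_ideal0 (I : set (X -> R)) (a : nat -> X -> R) :
  sum_mul_ideal I a 0 = [set fun _ => 0].
Proof.
apply/seteqP; split => h.
  by case=> m _ ->; apply/funext => x; rewrite big_ord0.
by move=> ->; exists (fun _ _ => 0) => //; apply/funext => x; rewrite big_ord0.
Qed.

Lemma sum_mul_ideal1 (I : set (X -> R)) (a : nat -> X -> R) :
  sum_mul_ideal I a 1 = mul_set (a 0%N) I.
Proof.
apply/seteqP; split => _ [m Im ->].
  by exists (m 0%N); [exact: Im | apply/funext => x; rewrite big_ord1].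
by exists (fun _ => m) => //; apply/funext => x; rewrite big_ord1.
Qed.

Lemma sum_mul_idealS (I : set (X -> R)) (a : nat -> X -> R) (k n : nat) :
  I (fun _ => 0) -> (k <= n)%N -> sum_mul_ideal I a k `<=` sum_mul_ideal I a n.
Proof.
move=> I0 kn _ [m Im ->].
exists (fun j => if (j < k)%N then m j else fun _ => 0).
  by move=> j _; case: ifP => // jk; exact: Im.
apply/funext => x; rewrite (big_ord_widen n (fun j => a j x * m j x) kn).
by rewrite big_mkcond; apply: eq_bigr => j _; case: ifP; rewrite ?mulr0.
Qed.

Lemma sum_mul_ideal_sub (I : set (X -> R)) (a : nat -> X -> R) (n : nat) :
  is_ideal P I -> (forall j, (j < n)%N -> CP P (a j)) ->
  sum_mul_ideal I a n `<=` I.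
Proof.
case=> _ I0 ID IM Ca _ [m Im ->].
suff partial k : (k <= n)%N -> I (fun x => \sum_(j < k) a j x * m j x) by exact: partial.
elim: k => [|k IHk] kn.
  by rewrite (_ : (fun _ => _) = fun _ => 0) //; apply/funext => x; rewrite big_ord0.
rewrite (_ : (fun _ => _) = fun x => \sum_(j < k) a j x * m j x + a k x * m k x).
  by apply: ID; [exact: IHk (ltnW kn) | apply: IM; [exact: Ca | exact: Im]].
by apply/funext => x; rewrite big_ord_recr.
Qed.

Lemma quot_regular0 (I : set (X -> R)) (a : nat -> X -> R) (b : X -> R) :
  quot_regular I (sum_mul_ideal I a 0) b <-> regular_on I b.
Proof.
rewrite sum_mul_ideal0; split => rb m Im.
  by move=> bm0; apply: contrapT => /(rb m Im).
by move=> nm0 bm0; apply: nm0; exact: rb.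
Qed.

Lemma regular_seq_mul_head_neq (I : set (X -> R)) (a : nat -> X -> R) (n : nat) :
  is_ideal P I -> regular_seq P I a n -> (0 < n)%N -> mul_set (a 0%N) I <> I.
Proof.
move=> II [Ca _ neqI] n0 aI; apply: neqI; apply/seteqP; split.
  exact: sum_mul_ideal_sub.
rewrite -{1}aI -sum_mul_ideal1; apply: sum_mul_idealS => //.
by case: II.
Qed.

Lemma depth_zero_regular_onto (I : set (X -> R)) (b : X -> R) :
  depth_zero P I -> CP P b -> regular_on I b -> mul_set b I = I.
Proof.
move=> D Cb rb; apply: contrapT => bI; apply: D.
exists (fun _ => b), 1%N; split => //; split => //; last by rewrite sum_mul_ideal1.
by move=> k; rewrite ltnS leqn0 => /eqP ->; apply/quot_regular0.
Qed.

Lemma PP_of_depth_zero :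
  (forall I : set (X -> R), is_ideal P I -> depth_zero P I) -> PP_space R P.
Proof.
move=> D f Cf; pose I := mul_set f (CP P).
have f_regular : regular_on I f.
  move=> _ [r _ ->] ffr; apply/funext => x.
  have /eqP := congr1 (fun h => h x) ffr; rewrite /= mulf_eq0.
  by case/orP => /eqP // ->; rewrite mul0r.
have fI : mul_set f I = I.
  exact: depth_zero_regular_onto (D I (principal_ideal Cf)) Cf f_regular.
have [_ [r Cr ->] Ef] : mul_set f I f by rewrite fI; exact: principal_self.
exists r => //; apply/funext => x.
by have /= Ex := congr1 (fun h => h x) Ef; rewrite [LHS]Ex; ring.
Qed.

Lemma depth_zero_of_PP (I : set (X -> R)) :
  PP_space R P -> is_ideal P I -> depth_zero P I.
Proof.
move=> PP II [a [n [n0 rs]]]; apply: (regular_seq_mul_head_neq II rs n0).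
have [Ca /(_ 0%N n0)/quot_regular0 a_regular _] := rs.
have [b Cb Eb] := PP _ (Ca 0%N n0).
have [_ _ ID IM] := II.
apply/seteqP; split; first exact: mul_set_sub II (Ca 0%N n0).
move=> m Im; exists (fun x => b x * m x); first exact: IM.
pose d x := m x + (-1 * (a 0%N x * b x)) * m x.
have Id : I d.
  by apply: ID => //; apply: IM => //; apply: CPM; [exact: CP_cst | exact: CPM (Ca 0%N n0) Cb].
have ad0 : (fun x => a 0%N x * d x) = (fun _ => 0).
  apply/funext => x; have /= Ex := congr1 (fun h => h x) Eb.
  have aba : a 0%N x * (a 0%N x * b x) = a 0%N x by rewrite [RHS]Ex; ring.
  rewrite /d; transitivity (a 0%N x * m x - a 0%N x * (a 0%N x * b x) * m x).
    by ring.
  by rewrite aba subrr.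
apply/funext => x; have /= /eqP := congr1 (fun h => h x) (a_regular d Id ad0).
by rewrite /d mulN1r mulNr subr_eq0 => /eqP Ex; rewrite [LHS]Ex mulrA.
Qed.

Lemma almost_PP_of_depth_zero :
  (forall I : set (X -> R), essential_ideal P I -> depth_zero P I) ->
  almost_PP_space R P.
Proof.
move=> D f Cf [x0 fx0]; apply: contrapT => int_empty.
have f_regular : regular_on (CP P) f.
  move=> m Cm fm0; apply: contrapT => /fun_neq0P [y my]; apply: int_empty.
  exists y, m; split => //; split => // z mz.
  have /eqP := congr1 (fun h => h z) fm0; rewrite /= mulf_eq0.
  by case/orP => /eqP // mz0; rewrite /coz /= mz0 eqxx in mz.
have := depth_zero_regular_onto (D _ CP_essential) Cf f_regular.
move/seteqP => [_ /(_ _ (CP_cst 1)) [m _ /(congr1 (fun h => h x0)) /= /eqP]].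
by rewrite fx0 mul0r oner_eq0.
Qed.

Lemma essential_regular_nowhere0 (I : set (X -> R)) (a : X -> R) :
  almost_PP_space R P -> essential_ideal P I -> CP P a -> regular_on I a ->
  forall x, a x != 0.
Proof.
move=> AP [_ ess] Ca a_regular x; apply/negP => /eqP ax.
have [y [g [Cg [gy gZ]]]] := AP _ Ca (ex_intro _ x ax).
have [|h [Ih [r _ Eh]] h0] := ess _ (principal_ideal Cg).
  by exists g; [exact: principal_self | move=> g0; rewrite g0 /coz /= eqxx in gy].
apply: h0; apply: a_regular Ih _; rewrite Eh; apply/funext => z.
have [gz0|gz] := eqVneq (g z) 0; first by rewrite gz0 mul0r mulr0.
by rewrite (gZ z gz) mul0r.
Qed.

Lemma depth_zero_of_almost_PP (I : set (X -> R)) :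
  almost_PP_space R P -> essential_ideal P I -> depth_zero P I.
Proof.
move=> AP EI [a [n [n0 rs]]]; have [II _] := EI.
apply: (regular_seq_mul_head_neq II rs n0).
have [Ca /(_ 0%N n0)/quot_regular0 a_regular _] := rs.
apply: mul_set_unit II (Ca 0%N n0) _.
exact: essential_regular_nowhere0 AP EI (Ca 0%N n0) a_regular.
Qed.

End CXP_depth.

Theorem theorem4p5 (X : topologicalType) (R : realType) (P : set (set X)) :
  accessible_space X -> closed_ideal P ->
  ((forall I : set (X -> R), is_ideal P I -> depth_zero P I) <-> PP_space R P) /\
  ((forall I : set (X -> R), essential_ideal P I -> depth_zero P I)
     <-> almost_PP_space R P).
Proof.
move=> _ hP; split; split.
- exact: PP_of_depth_zero.
- by move=> PP I; exact: depth_zero_of_PP.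
- exact: almost_PP_of_depth_zero.
- by move=> AP I; exact: depth_zero_of_almost_PP.
Qed.
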